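(* Let $X$ be a real reflexive Banach space, and let $\mathcal{H}$, $\mathcal{A}$, $\mathcal{H}_{\ast\le}$, $\mathcal{H}_{\ast\ge}$ be as in the context. Then: (i) $\mathcal{A}$ maps $\mathcal{H}$ into $\mathcal{H}_{\ast\le}$, and the map $h\mapsto(\mathcal{A}h)^{\ast}\circ i$ maps $\mathcal{H}$ into $\mathcal{H}_{\ast\ge}$. (ii) The set of fixed points of $\mathcal{A}$ is $\{h\in\mathcal{H}_{\ast\le}: h^{\ast}\circ i=h \text{ on } \mathrm{dom}(h)\}$. (iii) For every $h\in\mathcal{H}$ and every $n\ge1$, $\mathrm{dom}(\mathcal{A}^n h)=\mathrm{dom}(h)\cap\mathrm{dom}(h^{\ast}\circ i)$. (iv) For every $h\in\mathcal{H}$, the sequences $\{\mathcal{A}^n h\}_{n\ge1}\subset\mathcal{H}_{\ast\le}$ and $\{(\mathcal{A}^n h)^{\ast}\circ i\}_{n\ge1}\subset\mathcal{H}_{\ast\ge}$ are pointwise non-increasing and non-decreasing, respectively. Their pointwise limit $\mathcal{A}^{\infty}h:=\lim_{n}\mathcal{A}^n h$ satisfies $\mathrm{dom}(\mathcal{A}^{\infty}h)=\mathrm{dom}(h)\cap\mathrm{dom}(h^{\ast}\circ i)$, and if $\mathcal{A}^{\infty}h$ is lower semicontinuous then it is a fixed point of $\mathcal{A}$. (v) For every $h\in\mathcal{H}$ and every $n\ge1$, $(\mathcal{A}^n h)^{\ast}\circ i\le\mathcal{A}^{\infty}h\le\mathcal{A}^n h$. (vi) For every $h\in\mathcal{H}$,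 the sequence $\{(\mathcal{A}^n h)^{\ast}\circ i\}_{n\ge1}$ converges pointwise to $\mathcal{A}^{\infty}h$ on $\mathrm{dom}(h)\cap\mathrm{dom}(h^{\ast}\circ i)$. (vii) If $T:X\rightrightarrows X^{\ast}$ is maximally monotone, $h\in\mathcal{H}(T)$, and $\mathcal{A}^{\infty}h$ is lower semicontinuous, then $\mathcal{A}^{\infty}h\in\mathcal{H}(T)$.
   Context: $X^{\ast}$ is the dual of $X$ with pairing $\langle\cdot,\cdot\rangle$. The dual of $X\times X^{\ast}$ is identified with $X^{\ast}\times X$ via $\langle (x,x^{\ast}),(y^{\ast},y)\rangle=\langle x,y^{\ast}\rangle+\langle y,x^{\ast}\rangle$; for $g:X\times X^{\ast}\to\mathbb{R}\cup\{+\infty\}$, its conjugate is $g^{\ast}(y^{\ast},y)=\sup_{(x,x^{\ast})}\{\langle x,y^{\ast}\rangle+\langle y,x^{\ast}\rangle-g(x,x^{\ast})\}$. Let $i:X\times X^{\ast}\to X^{\ast}\times X$, $i(x,x^{\ast})=(x^{\ast},x)$, so $g^{\ast}\circ i$ is a function on $X\times X^{\ast}$. For a maximally monotone $T:X\rightrightarrows X^{\ast}$, $\mathcal{H}(T)$ is the family of lower semicontinuous convex functions $h:X\times X^{\ast}\to\mathbb{R}\cup\{+\infty\}$ with $h(x,x^{\ast})\ge\langle x,x^{\ast}\rangle$ everywhere and $h(x,x^{\ast})=\langle x,x^{\ast}\rangle$ whenever $x^{\ast}\in T(x)$. $\mathcal{H}:=\bigcup\{\mathcal{H}(T): T \text{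 maximally monotone}\}$. The map $\mathcal{A}:\mathcal{H}\to\mathcal{H}$ is $\mathcal{A}h:=\tfrac12(h+h^{\ast}\circ i)$ (it is known that $\mathcal{A}h\in\mathcal{H}(T)$ whenever $h\in\mathcal{H}(T)$), and $\mathcal{A}^n$ denotes its $n$-th iterate. $\mathcal{H}_{\ast\le}:=\{h\in\mathcal{H}: h^{\ast}\circ i\le h\}$ and $\mathcal{H}_{\ast\ge}:=\{h\in\mathcal{H}: h^{\ast}\circ i\ge h\}$. $\mathrm{dom}(g)=\{z: g(z)<+\infty\}$. *)

From HB Require Import structures.
From mathcomp Require Import all_boot all_order all_algebra.
From mathcomp Require Import all_classical all_reals all_analysis.
Set Implicit Arguments. Unset Strict Implicit. Unset Printing Implicit Defensive.
Import Order.TTheory GRing.Theory Num.Theory.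
Import numFieldNormedType.Exports.
Local Open Scope classical_set_scope.
Local Open Scope ring_scope.

Section Defs.
Variables (R : realType) (X : normedModType R).

(* The (topological) dual X^* : continuous (= bounded) linear functionals. *)
Definition is_dual_fun (f : X -> R) :=
  (forall (a : R) (x y : X), f (a *: x + y) = a * f x + f y) /\
  (exists M : R, forall x : X, `|f x| <= M * `|x|).

Record dual := Dual { dfun :> X -> R ; dfunP : is_dual_fun dfun }.

Definition pairing (x : X) (f : dual) : R := f x.

Definition ddist (f g : dual) : R :=
  sup [set `|f x - g x| | x in [set x : X | `|x| <= 1]].
Definition dnorm (f : dual) : R :=
  sup [set `|f x| | x in [set x : X | `|x| <= 1]].

Definition reflexive_space :=
  forall phi : dual -> R,
    (forall (a : R) (f g z : dual), (forall x, z x = a * f x + g x) ->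
       phi z = a * phi f + phi g) ->
    (exists M : R, forall f, `|phi f| <= M * dnorm f) ->
    exists x : X, forall f, phi f = f x.

(* functions X x X^* -> R \cup {+oo} (values in \bar R) *)
Local Open Scope ereal_scope.

Definition lsc (h : X * dual -> \bar R) :=
  forall p : X * dual, forall r : R, r%:E < h p ->
    exists2 d : R, (0 < d)%R & forall q : X * dual,
      (`|q.1 - p.1| < d)%R -> (ddist q.2 p.2 < d)%R -> r%:E < h q.

(* convexity of an extended-valued function (epigraph convexity) *)
Definition convexf (h : X * dual -> \bar R) :=
  forall (p q z : X * dual) (t : R), (0 <= t <= 1)%R ->
    (z.1 = t *: p.1 + (1 - t) *: q.1)%R ->
    (forall x, z.2 x = t * p.2 x + (1 - t) * q.2 x)%R ->
    forall a b : R, h p <= a%:E -> h q <= b%:E ->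
      h z <= (t * a + (1 - t) * b)%:E.

(* g^* o i :  (x, x^* ) |-> sup_{(z,z^* )} <z, x^*> + <x, z^*> - g(z, z^* ) *)
Definition conjI (g : X * dual -> \bar R) : X * dual -> \bar R :=
  fun p => ereal_sup [set ((pairing q.1 p.2 + pairing p.1 q.2)%:E - g q)
                     | q in [set: X * dual]].

Definition monotone (G : set (X * dual)) :=
  forall p q, G p -> G q ->
    (0 <= pairing p.1 p.2 - pairing p.1 q.2 - pairing q.1 p.2
          + pairing q.1 q.2)%R.

Definition maximal_monotone (G : set (X * dual)) :=
  monotone G /\ forall S, monotone S -> G `<=` S -> S = G.

Definition HT (G : set (X * dual)) (h : X * dual -> \bar R) :=
  [/\ lsc h, convexf h,
      (forall p, (pairing p.1 p.2)%:E <= h p) &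
      (forall p, G p -> h p = (pairing p.1 p.2)%:E)].

Definition Hall (h : X * dual -> \bar R) :=
  exists G, maximal_monotone G /\ HT G h.

Definition Aop (h : X * dual -> \bar R) : X * dual -> \bar R :=
  fun p => (2^-1)%:E * (h p + conjI h p).

Definition Hle h := Hall h /\ forall p, conjI h p <= h p.
Definition Hge h := Hall h /\ forall p, h p <= conjI h p.

Definition edom (g : X * dual -> \bar R) := [set p | g p < +oo].

Definition Ainf (h : X * dual -> \bar R) : X * dual -> \bar R :=
  fun p => limn (fun n => iter n Aop h p).

End Defs.

From Pilot Require Import Defs.
From HB Require Import structures.
From mathcomp Require Import all_boot all_order all_algebra.
From mathcomp Require Import all_classical all_reals all_analysis.
From mathcomp Require Import ring lra.
Import Order.TTheory GRing.Theory Num.Theory.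
Import numFieldNormedType.Exports.
Set Implicit Arguments. Unset Strict Implicit.
Local Open Scope classical_set_scope.
Local Open Scope ring_scope.

(* The map [g |-> g^* o i] is antitone and
   [g^** o i o i <= g]; it keeps [H(T)] stable for maximally monotone [T]
   (lower semicontinuity and convexity come from being a supremum of affine
   functions, [>= coupling] from maximality of [T], [= coupling] on the graph from
   convexity of [h]). Hence [(A h)^* o i <= (h^* o i + h) / 2 = A h], so every
   [A^n h] with [n >= 1] dominates its conjugate, the iterates decrease, their
   conjugates increase, and each conjugate lies below every iterate. On the common
   domain all values are finite and [(A^n h)^* o i = 2 A^(n+1) h - A^n h], so the
   conjugates converge to [A^oo h] as well; together with antitonicity of the
   conjugation this makes [A^oo h] equal to its own conjugate, i.e. a fixed point. *)

Section DualSpace.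
Variables (R : realType) (X : normedModType R).
Implicit Types (f g : dual X) (x y : X).

Lemma dual0 f : f 0 = 0.
Proof.
case: (dfunP f) => lin _; have := lin 1 0 0.
rewrite scaler0 addr0 mul1r; lra.
Qed.

Lemma dualZ f a x : f (a *: x) = a * f x.
Proof. by case: (dfunP f) => lin _; have := lin a x 0; rewrite !addr0 dual0 addr0. Qed.

Lemma dualD f x y : f (x + y) = f x + f y.
Proof. by case: (dfunP f) => lin _; have := lin 1 x y; rewrite scale1r mul1r. Qed.

Lemma dualB f x y : f (x - y) = f x - f y.
Proof. by apply/eqP; rewrite eq_sym subr_eq -dualD subrK. Qed.

Lemma dual_bounded f : exists2 M, 0 <= M & forall x, `|f x| <= M * `|x|.
Proof.
case: (dfunP f) => _ [M HM]; exists `|M| => // x.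
by apply: le_trans (HM x) _; rewrite ler_wpM2r // real_ler_norm // num_real.
Qed.

Lemma ddist_ge f g x : `|f x - g x| <= ddist f g * `|x|.
Proof.
have [Mf Mf0 HMf] := dual_bounded f; have [Mg Mg0 HMg] := dual_bounded g.
set S := [set `|f x - g x| | x in [set x : X | `|x| <= 1]].
have supS : has_sup S.
  split; first by exists `|f 0 - g 0|, 0 => //=; rewrite normr0.
  exists (Mf + Mg) => _ [y /= y1 <-].
  apply: le_trans (ler_normB _ _) _; apply: lerD.
    by apply: le_trans (HMf y) _; rewrite -[leRHS]mulr1 ler_wpM2l.
  by apply: le_trans (HMg y) _; rewrite -[leRHS]mulr1 ler_wpM2l.
have [->|x0] := eqVneq x 0; first by rewrite !dual0 subrr !normr0 mulr0.
have nx : 0 < `|x| by rewrite normr_gt0.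
have Sx : S (`|x|^-1 * `|f x - g x|).
  exists (`|x|^-1 *: x).
    by rewrite /= normrZ ger0_norm ?mulVf ?gt_eqF // invr_ge0 ltW.
  by rewrite !dualZ -mulrBr normrM ger0_norm // invr_ge0 ltW.
by have := sup_upper_bound supS Sx; rewrite -ler_pdivrMr // mulrC.
Qed.

Definition dual_comb_fun (a b : R) f g : X -> R := fun x => a * f x + b * g x.

Lemma dual_combP a b f g : is_dual_fun (dual_comb_fun a b f g).
Proof.
split=> [c x y|]; first by rewrite /dual_comb_fun !dualD !dualZ; ring.
have [Mf Mf0 HMf] := dual_bounded f; have [Mg Mg0 HMg] := dual_bounded g.
exists (`|a| * Mf + `|b| * Mg) => x; rewrite /dual_comb_fun.
apply: le_trans (ler_normD _ _) _; rewrite !normrM mulrDl -!mulrA.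
by apply: lerD; apply: ler_wpM2l.
Qed.

Definition dual_comb a b f g : dual X := Dual (dual_combP a b f g).

End DualSpace.

Section ExtendedAverage.
Variable R : realType.
Local Open Scope ereal_scope.
Implicit Types (x y : \bar R) (a r : R).

Definition eavg x y : \bar R := (2^-1)%:E * (x + y).

Lemma half_pinfty : (2^-1)%:E * +oo = +oo :> \bar R.
Proof. by rewrite mulry gtr0_sg ?mul1e // invr_gt0. Qed.

Lemma half_ninfty : (2^-1)%:E * -oo = -oo :> \bar R.
Proof. by rewrite mulrNy gtr0_sg ?mul1e // invr_gt0. Qed.

Lemma eavgE a r : eavg a%:E r%:E = ((a + r) / 2)%:E.
Proof. by rewrite /eavg -EFinD -EFinM mulrC. Qed.

Lemma eavgC x y : eavg x y = eavg y x.
Proof. by rewrite /eavg addeC. Qed.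

Lemma eavg_le x y x' y' : x <= x' -> y <= y' -> eavg x y <= eavg x' y'.
Proof. by move=> xx' yy'; apply: lee_wpmul2l; [rewrite lee_fin invr_ge0|exact: leeD]. Qed.

Lemma eavg_le_l x y : y <= x -> eavg x y <= x.
Proof.
case: x => [x| |]; case: y => [y| |] //= yx;
  rewrite /eavg ?addeNy ?half_ninfty ?leey ?leNye //.
by rewrite -EFinD -EFinM lee_fin; rewrite lee_fin in yx; lra.
Qed.

Lemma le_eavg a x y : a%:E <= x -> a%:E <= y -> a%:E <= eavg x y.
Proof.
case: x => [x| |] //; case: y => [y| |] //; rewrite ?lee_fin /eavg => ax ay;
  rewrite ?addey ?addye // -?EFinD -?EFinM ?half_pinfty ?leey // ?lee_fin; lra.
Qed.

Lemma eavg_lty x y : -oo < x -> -oo < y -> (eavg x y < +oo) = (x < +oo) && (y < +oo).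
Proof.
case: x => [x| |] //; case: y => [y| |] //= _ _;
  by rewrite /eavg ?addey ?addye // -?EFinD -?EFinM ?half_pinfty ?ltry.
Qed.

Lemma eavg_eq_l x y : -oo < x -> -oo < y -> (eavg x y = x <-> (x < +oo -> y = x)).
Proof.
case: x => [x| |] //; case: y => [y| |] //= _ _; rewrite ?eavgE.
- split=> [[xy] _|yx]; first by congr _%:E; lra.
  by case: (yx (ltry x)) => ->; congr _%:E; field.
- by split=> [|/(_ (ltry x))//]; rewrite /eavg addey // half_pinfty.
- by rewrite /eavg addye // half_pinfty.
- by rewrite /eavg addye // half_pinfty.
Qed.

Lemma eavg_twice_subl x y :
  x \is a fin_num -> y \is a fin_num -> eavg x y + eavg x y - x = y.
Proof.
by case: x y => [x| |] [y| |] // _ _; rewrite eavgE -EFinD; congr _%:E; field.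
Qed.

Lemma subr_eavg r x y : -oo < x -> -oo < y ->
  r%:E - eavg x y <= eavg (r%:E - x) (r%:E - y).
Proof.
case: x => [x| |] //; case: y => [y| |] // _ _;
  rewrite /eavg /= -?EFinD -?EFinM ?half_pinfty ?leNye // lee_fin; lra.
Qed.

Lemma lt_eavgP r x y : -oo < x -> -oo < y ->
  r%:E < eavg x y <-> exists r1 r2, [/\ r1%:E < x, r2%:E < y & (r1 + r2 = 2 * r)%R].
Proof.
move=> xNy yNy; split=> [|[r1 [r2 [xr1 yr2 r12]]]]; last first.
  move: x y xr1 yr2 {xNy yNy} => [x| |] [y| |] //; rewrite ?lte_fin => xr1 yr2;
    rewrite /eavg ?addey ?addye // -?EFinD -?EFinM ?half_pinfty ?ltry // ?lte_fin; lra.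
move: x y xNy yNy => [x| |] [y| |] // _ _.
- rewrite eavgE lte_fin => rxy.
  exists (x - ((x + y) / 2 - r))%R, (y - ((x + y) / 2 - r))%R.
  by split; rewrite ?lte_fin; [lra|lra|field].
- by exists (x - 1)%R, (2 * r - x + 1)%R; split; rewrite ?lte_fin ?ltry //; [lra|ring].
- by exists (2 * r - y + 1)%R, (y - 1)%R; split; rewrite ?lte_fin ?ltry //; [lra|ring].
- by exists r, r; split; rewrite ?ltry //; ring.
Qed.

End ExtendedAverage.

Section Conjugate.
Variables (R : realType) (X : normedModType R).
Local Notation Y := (X * dual X)%type.
Local Open Scope ereal_scope.
Implicit Types (g h : Y -> \bar R) (p q : Y) (G : set Y).

Definition coupling p : R := pairing p.1 p.2.

Definition cross p q : R := (pairing q.1 p.2 + pairing p.1 q.2)%R.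

Lemma crossC p q : cross p q = cross q p.
Proof. by rewrite /cross addrC. Qed.

Lemma AopE g p : Aop g p = eavg (g p) (conjI g p).
Proof. by []. Qed.

Lemma le_conjI g p q : (cross p q)%:E - g q <= conjI g p.
Proof. by apply: ereal_sup_ubound; exists q. Qed.

Lemma conjI_le g p a : (forall q, (cross p q)%:E - g q <= a) -> conjI g p <= a.
Proof. by move=> ub; apply: ge_ereal_sup => _ [q _ <-]; exact: ub. Qed.

Lemma conjI_antitone g1 g2 :
  (forall p, g1 p <= g2 p) -> forall p, conjI g2 p <= conjI g1 p.
Proof.
by move=> g12 p; apply: conjI_le => q; apply: le_trans (le_conjI g1 p q); exact: leeB.
Qed.

Lemma conjIK_le g p : conjI (conjI g) p <= g p.
Proof.
apply: conjI_le => q; have := le_conjI g q p; rewrite crossC.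
case: (g p) => [r| |]; case: (conjI g q) => [c| |] //=; rewrite ?leey ?leNye //.
by rewrite !lee_fin; lra.
Qed.

Lemma conjI_lsc g : lsc (conjI g).
Proof.
move=> p r /ereal_sup_gt [_ [q _ <-] rlt].
case gq: (g q) rlt => [gam| |] rlt; last 2 first.
- by rewrite /= ltNge leNye in rlt.
- by exists 1%R => // q' _ _; apply: lt_le_trans (le_conjI g q' q); rewrite gq /= ltry.
rewrite -EFinB lte_fin in rlt.
set eps := (cross p q - gam - r)%R.
have [M M0 HM] := dual_bounded q.2.
have den0 : (0 < `|q.1| + M + 1)%R by apply: ltr_wpDl; [apply: addr_ge0|].
set d := (eps / (`|q.1| + M + 1))%R.
have d0 : (0 < d)%R by rewrite divr_gt0 // /eps /cross; lra.
have epsE : (d * `|q.1| + M * d + d = eps)%R by rewrite /d; field; exact: lt0r_neq0.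
exists d => // q' q'1 q'2; apply: lt_le_trans (le_conjI g q' q).
rewrite gq -EFinB lte_fin.
have dq2 : (`|q'.2 q.1 - p.2 q.1| <= d * `|q.1|)%R.
  by apply: le_trans (ddist_ge _ _ _) _; apply: ler_wpM2r => //; exact: ltW.
have dq1 : (`|q.2 q'.1 - q.2 p.1| <= M * d)%R.
  by rewrite -dualB; apply: le_trans (HM _) _; apply: ler_wpM2l => //; exact: ltW.
move: dq2 dq1 rlt epsE; rewrite !ler_norml /eps /cross /pairing.
by move=> /andP[? ?] /andP[? ?]; lra.
Qed.

Lemma conjI_convex g : convexf (conjI g).
Proof.
move=> p q z t /andP[t0 t1] z1 z2 a b hp hq; apply: conjI_le => w.
have crossz : cross z w = (t * cross p w + (1 - t) * cross q w)%R.
  by rewrite /cross /pairing z2 z1 dualD !dualZ; ring.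
move: (le_trans (le_conjI g p w) hp) (le_trans (le_conjI g q w) hq).
case: (g w) => [gam| |] //=; rewrite ?leNye //.
rewrite -!EFinB !lee_fin crossz => pw qw.
have := ler_wpM2l t0 pw; have := @ler_wpM2l _ (1 - t)%R _ _ _ qw; lra.
Qed.

Lemma conjI_ge_coupling G h : maximal_monotone G ->
  (forall p, G p -> h p = (coupling p)%:E) -> forall p, (coupling p)%:E <= conjI h p.
Proof.
move=> [monG maxG] hG p; rewrite leNgt; apply/negP => conj_lt.
have related a : G a -> (0 < coupling p + coupling a - cross p a)%R.
  move=> Ga; have := le_lt_trans (le_conjI h p a) conj_lt.
  by rewrite hG // -EFinB lte_fin; lra.
have monGp : Defs.monotone (G `|` [set p]).
  move=> a b [Ga|->] [Gb|->]; first exact: monG.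
  - by have := related _ Ga; rewrite /cross /coupling /pairing; lra.
  - by have := related _ Gb; rewrite /cross /coupling /pairing; lra.
  - by rewrite /pairing; lra.
have Gp : G p by rewrite -(maxG _ monGp (@subsetUl _ _ _)); right.
by have := related _ Gp; rewrite /cross /coupling; lra.
Qed.

Lemma exists_small_weight (c K : R) : (0 < c)%R ->
  exists2 t : R, (0 < t <= 1)%R & (0 < c + t * K)%R.
Proof.
move=> c0; have cK0 : (0 < c + `|K|)%R by apply: ltr_wpDr.
set t := (c / (c + `|K|))%R; have t0 : (0 < t)%R by rewrite divr_gt0.
exists t; first by rewrite t0 /= ler_pdivrMr // mul1r lerDl.
have tK : (- (t * `|K|) <= t * K)%R.
  by rewrite -mulrN; apply: ler_wpM2l; [exact: ltW|rewrite lerNl -normrN ler_norm].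
have : (t * `|K| < c)%R.
  by rewrite /t mulrAC ltr_pdivrMr // mulrDr ltrDr mulr_gt0.
lra.
Qed.

(* A [q] with [cross p q - h q > coupling p] would, by convexity of [h], push [h]
   below [coupling] at points of the segment from [p] towards [q] close to [p]. *)
Lemma conjI_graph G h : convexf h -> (forall p, (coupling p)%:E <= h p) ->
  (forall p, G p -> h p = (coupling p)%:E) ->
  forall p, G p -> conjI h p = (coupling p)%:E.
Proof.
move=> hconv hge hG p Gp; apply/le_anti/andP; split; last first.
  by apply: le_trans (le_conjI h p p); rewrite hG // -EFinB lee_fin /cross /coupling; lra.
apply: conjI_le => q; have := hge q; case hq: (h q) => [beta| |] //=; last by rewrite leNye.
move=> beta_ge; rewrite -EFinB lee_fin leNgt; apply/negP => beats.
set c := (cross p q - coupling p - beta)%R.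
set K := (coupling q - cross p q + coupling p)%R.
have [t /andP[t0 t1] ctK] := @exists_small_weight c K ltac:(rewrite /c; lra).
set z : Y := ((t *: q.1 + (1 - t) *: p.1)%R, dual_comb t (1 - t) q.2 p.2).
have hz := hconv q p z t ltac:(rewrite ltW //=) erefl (fun=> erefl) beta (coupling p)
  ltac:(by rewrite hq) ltac:(by rewrite hG).
have := le_trans (hge z) hz; rewrite lee_fin.
have -> : coupling z = (t * (t * coupling q + (1 - t) * q.2 p.1) +
    (1 - t) * (t * p.2 q.1 + (1 - t) * coupling p))%R.
  by rewrite /coupling /pairing /= /dual_comb_fun !dualD !dualZ.
move=> convex_bound; have := mulr_gt0 t0 ctK.
by rewrite /c /K /cross /coupling /pairing in convex_bound *; nra.
Qed.

Lemma conjI_Aop_le g : (forall q, -oo < g q) -> (forall q, -oo < conjI g q) ->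
  forall p, conjI (Aop g) p <= Aop g p.
Proof.
move=> gNy cNy p; apply: (@le_trans _ _ (eavg (conjI g p) (conjI (conjI g) p))).
  apply: conjI_le => q; rewrite AopE; apply: le_trans (subr_eavg _ (gNy q) (cNy q)) _.
  by apply: eavg_le; exact: le_conjI.
by rewrite AopE eavgC; apply: eavg_le => //; exact: conjIK_le.
Qed.

End Conjugate.

Section Representatives.
Variables (R : realType) (X : normedModType R).
Local Notation Y := (X * dual X)%type.
Local Open Scope ereal_scope.
Implicit Types (f g h : Y -> \bar R) (p q : Y) (G : set Y).

Lemma lsc_eavg f g : lsc f -> lsc g -> (forall p, -oo < f p) -> (forall p, -oo < g p) ->
  lsc (fun p => eavg (f p) (g p)).
Proof.
move=> lf lg fNy gNy p r /(lt_eavgP _ (fNy p) (gNy p)) [r1 [r2 [fr1 gr2 r12]]].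
have [d1 d10 near1] := lf p r1 fr1; have [d2 d20 near2] := lg p r2 gr2.
exists (Order.min d1 d2); first by rewrite lt_min d10 d20.
move=> q; rewrite !lt_min => /andP[q11 q12] /andP[q21 q22].
by apply/(lt_eavgP _ (fNy q) (gNy q)); exists r1, r2; split; [exact: near1|exact: near2|].
Qed.

Lemma convex_eavg f g : convexf f -> convexf g -> (forall p, -oo < f p) ->
  (forall p, -oo < g p) -> convexf (fun p => eavg (f p) (g p)).
Proof.
move=> cf cg fNy gNy p q z t t01 z1 z2 a b.
move: (fNy p) (gNy p) (fNy q) (gNy q) (cf p q z t t01 z1 z2) (cg p q z t t01 z1 z2).
case: (f p) => [fp| |] //; case: (g p) => [gp| |] //; case: (f q) => [fq| |] //;
  case: (g q) => [gq| |] //; rewrite /eavg ?addey ?addye // ?half_pinfty ?leye_eq //.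
move=> _ _ _ _ cfz cgz; rewrite -!EFinD -!EFinM !lee_fin => ha hb.
move: (cfz fp fq (lexx _) (lexx _)) (cgz gp gq (lexx _) (lexx _)) (fNy z) (gNy z).
case: (f z) => [fz| |] //; case: (g z) => [gz| |] //; rewrite !lee_fin => fz_le gz_le _ _.
move/andP: t01 => [t0 t1].
have := ler_wpM2l t0 ha; have := @ler_wpM2l _ (1 - t)%R _ _ _ hb; lra.
Qed.

Lemma HT_gtNy G h : HT G h -> forall p, -oo < h p.
Proof. by case=> _ _ hge _ p; apply: lt_le_trans (hge p); rewrite ltNyr. Qed.

Lemma HT_conjI G h : maximal_monotone G -> HT G h -> HT G (conjI h).
Proof.
move=> mG [_ hconv hge hG]; split.
- exact: conjI_lsc.
- exact: conjI_convex.
- exact: conjI_ge_coupling mG hG.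
- exact: conjI_graph hconv hge hG.
Qed.

Lemma HT_Aop G h : maximal_monotone G -> HT G h -> HT G (Aop h).
Proof.
move=> mG hh; have hc := HT_conjI mG hh.
case: (hh) => [l c hge hG]; case: (hc) => [l' c' hge' hG']; split.
- exact: lsc_eavg l l' (HT_gtNy hh) (HT_gtNy hc).
- exact: convex_eavg c c' (HT_gtNy hh) (HT_gtNy hc).
- by move=> p; apply: le_eavg; [exact: hge|exact: hge'].
- by move=> p Gp; rewrite AopE hG // hG' // eavgE; congr _%:E; field.
Qed.

Lemma HT_iter G h : maximal_monotone G -> HT G h -> forall n, HT G (iter n (@Aop R X) h).
Proof. by move=> mG hh; elim=> [|n IH] //=; exact: HT_Aop. Qed.

Lemma Hle_Aop G h : maximal_monotone G -> HT G h -> Hle (Aop h) /\ Hge (conjI (Aop h)).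
Proof.
move=> mG hh; have hA := HT_Aop mG hh.
have conj_le := conjI_Aop_le (HT_gtNy hh) (HT_gtNy (HT_conjI mG hh)).
split; split=> //; first by exists G.
- by exists G; split=> //; exact: HT_conjI.
- by move=> p; apply: conjI_antitone.
Qed.

Lemma edom_Aop h : (forall p, -oo < h p) -> (forall p, -oo < conjI h p) ->
  edom (Aop h) = edom h `&` edom (conjI h).
Proof.
by move=> hNy cNy; apply/seteqP; split=> p; rewrite /edom /= AopE eavg_lty // => /andP.
Qed.

Lemma Aop_fixedP h :
  (Hall h /\ Aop h = h) <-> (Hle h /\ forall p, edom h p -> conjI h p = h p).
Proof.
split=> [[[G [mG hh]] hfix]|[[[G [mG hh]] _] cdom]].
  have hNy := HT_gtNy hh; have cNy := HT_gtNy (HT_conjI mG hh).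
  split=> [|p hp].
    by split=> [|p]; [exists G|have := conjI_Aop_le hNy cNy p; rewrite hfix].
  by have /(eavg_eq_l (hNy p) (cNy p)) := congr1 (fun f => f p) hfix; apply.
split; first by exists G.
apply/funext => p; apply/(eavg_eq_l (HT_gtNy hh p) (HT_gtNy (HT_conjI mG hh) p)).
exact: cdom.
Qed.

End Representatives.

Section Iteration.
Variables (R : realType) (X : normedModType R).
Local Notation Y := (X * dual X)%type.
Local Open Scope ereal_scope.
Variables (G : set Y) (h : Y -> \bar R).
Hypotheses (mG : maximal_monotone G) (hh : HT G h).

Local Notation A n := (iter n.+1 (@Aop R X) h).

Lemma HT_A n : HT G (A n).
Proof. exact: HT_iter. Qed.

Lemma A_gtNy n p : -oo < A n p.
Proof. exact: HT_gtNy (HT_A n) p. Qed.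

Lemma conjA_gtNy n p : -oo < conjI (A n) p.
Proof. exact: HT_gtNy (HT_conjI mG (HT_A n)) p. Qed.

Lemma A_Hle n : Hle (A n) /\ Hge (conjI (A n)).
Proof. exact: Hle_Aop (HT_iter mG hh n). Qed.

Lemma conjA_le n p : conjI (A n) p <= A n p.
Proof. by case: (A_Hle n) => [[_ +] _]; apply. Qed.

Lemma A_nonincreasing p : nonincreasing_seq (fun n => A n p).
Proof. by apply/nonincreasing_seqP => n; exact/eavg_le_l/conjA_le. Qed.

Lemma conjA_nondecreasing p : nondecreasing_seq (fun n => conjI (A n) p).
Proof.
by apply/nondecreasing_seqP => n; apply: conjI_antitone => q; exact: A_nonincreasing.
Qed.

Lemma conjA_le_A n m p : conjI (A n) p <= A m p.
Proof.
have [nm|mn] := leqP n m.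
  exact: le_trans (conjA_nondecreasing p nm) (conjA_le m p).
exact: le_trans (conjA_le n p) (A_nonincreasing p (ltnW mn)).
Qed.

Lemma A_cvg p : (fun n => A n p) @ \oo --> ereal_inf (range (fun n => A n p)).
Proof. exact: ereal_nonincreasing_cvgn (A_nonincreasing p). Qed.

Lemma AinfE p : Ainf h p = ereal_inf (range (fun n => A n p)).
Proof. by apply: cvg_lim => //; rewrite -cvg_shiftS; exact: A_cvg. Qed.

Lemma iter_Aop_cvg p : (fun n => iter n (@Aop R X) h p) @ \oo --> Ainf h p.
Proof. by rewrite AinfE -cvg_shiftS; exact: A_cvg. Qed.

Lemma Ainf_le_A n p : Ainf h p <= A n p.
Proof. by rewrite AinfE; apply: ereal_inf_lbound; exists n. Qed.

Lemma conjA_le_Ainf n p : conjI (A n) p <= Ainf h p.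
Proof. by rewrite AinfE; apply: le_ereal_inf_tmp => _ [m _ <-]; exact: conjA_le_A. Qed.

Lemma edom_A n : edom (A n) = edom h `&` edom (conjI h).
Proof.
elim: n => [|n IH]; first exact: edom_Aop (HT_gtNy hh) (HT_gtNy (HT_conjI mG hh)).
rewrite -IH edom_Aop; [|exact: A_gtNy|exact: conjA_gtNy].
apply/seteqP; split=> p; first by case.
by move=> Ap; split=> //; apply: le_lt_trans (conjA_le n p) Ap.
Qed.

Lemma edom_Ainf : edom (Ainf h) = edom h `&` edom (conjI h).
Proof.
apply/seteqP; split=> p; last first.
  by rewrite -(edom_A 0) => A0p; exact: le_lt_trans (Ainf_le_A 0 p) A0p.
rewrite /edom /= AinfE => /ereal_inf_lt [_ [n _ <-]] Anp.
by have : edom (A n) p := Anp; rewrite edom_A.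
Qed.

Lemma Ainf_gtNy p : -oo < Ainf h p.
Proof. exact: lt_le_trans (conjA_gtNy 0 p) (conjA_le_Ainf 0 p). Qed.

Section Domain.
Variable p : Y.
Hypothesis hp : (edom h `&` edom (conjI h)) p.

Lemma A_lty n : A n p < +oo.
Proof. by move: hp; rewrite -(edom_A n). Qed.

Lemma A_fin_num n : A n p \is a fin_num.
Proof. by rewrite fin_numElt A_gtNy A_lty. Qed.

Lemma conjA_fin_num n : conjI (A n) p \is a fin_num.
Proof. by rewrite fin_numElt conjA_gtNy (le_lt_trans (conjA_le n p) (A_lty n)). Qed.

Lemma Ainf_fin_num : Ainf h p \is a fin_num.
Proof. by rewrite fin_numElt Ainf_gtNy (le_lt_trans (Ainf_le_A 0 p) (A_lty 0)). Qed.

(* Since [A (n+1) = (A n + conjI (A n)) / 2], the conjugates are [2 A (n+1) - A n]. *)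
Lemma conjA_cvg : (fun n => conjI (A n) p) @ \oo --> Ainf h p.
Proof.
have L := Ainf_fin_num.
have A0 := @A_cvg p; rewrite -AinfE in A0.
have A1 := A0; rewrite -cvg_shiftS in A1.
have -> : (fun n => conjI (A n) p) = (fun n => A n.+1 p + A n.+1 p - A n p).
  apply/funext => n; rewrite [A n.+1 p]AopE eavg_twice_subl //.
  - exact: A_fin_num.
  - exact: conjA_fin_num.
have LL : Ainf h p + Ainf h p \is a fin_num by rewrite fin_numD L.
have := cvgeB (fin_num_adde_defr _ LL) (cvgeD (fin_num_adde_defr _ L) A1 A1) A0.
by rewrite addeK //; apply; exact: eventually_filter.
Qed.

End Domain.

Lemma Ainf_convex : convexf (Ainf h).
Proof.
move=> p q z t t01 z1 z2 a b hp hq; apply/lee_addgt0Pr => e e0.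
have : Ainf h p < (a + e)%:E by apply: le_lt_trans hp _; rewrite lte_fin ltrDl.
rewrite AinfE => /ereal_inf_lt [_ [n1 _ <-]] An1.
have : Ainf h q < (b + e)%:E by apply: le_lt_trans hq _; rewrite lte_fin ltrDl.
rewrite AinfE => /ereal_inf_lt [_ [n2 _ <-]] An2.
set N := maxn n1 n2.
have ANp : A N p <= (a + e)%:E by apply: le_trans (A_nonincreasing p (leq_maxl _ _)) (ltW An1).
have ANq : A N q <= (b + e)%:E by apply: le_trans (A_nonincreasing q (leq_maxr _ _)) (ltW An2).
case: (HT_A N) => _ AN_convex _ _.
apply: le_trans (Ainf_le_A N z) _; apply: le_trans (AN_convex p q z t t01 z1 z2 _ _ ANp ANq) _.
by rewrite -EFinD lee_fin; lra.
Qed.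

Lemma Ainf_HT : lsc (Ainf h) -> HT G (Ainf h).
Proof.
move=> Ainf_lsc; case: (HT_conjI mG (HT_A 0)) => _ _ conj_ge _.
case: (HT_A 0) => _ _ _ A_graph.
have Ainf_ge p : (coupling p)%:E <= Ainf h p.
  exact: le_trans (conj_ge p) (conjA_le_Ainf 0 p).
split=> //; [exact: Ainf_convex|move=> p Gp].
by apply/le_anti; rewrite Ainf_ge andbT -(A_graph p Gp) Ainf_le_A.
Qed.

Lemma Ainf_fixed : Aop (Ainf h) = Ainf h.
Proof.
apply/funext => p; rewrite AopE.
have conj_le : conjI (Ainf h) p <= Ainf h p.
  rewrite [leRHS]AinfE; apply: le_ereal_inf_tmp => _ [n _ <-].
  apply: le_trans (conjIK_le (A n) p); apply: conjI_antitone => q; exact: conjA_le_Ainf.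
have conj_gtNy : -oo < conjI (Ainf h) p.
  by apply: lt_le_trans (conjA_gtNy 0 p) _; apply: conjI_antitone => q; exact: Ainf_le_A.
apply/(eavg_eq_l (Ainf_gtNy p) conj_gtNy) => Ainf_lty; apply/le_anti; rewrite conj_le /=.
have hp : (edom h `&` edom (conjI h)) p by rewrite -edom_Ainf.
apply: (cvge_to_le (conjA_cvg hp)); apply: nearW => n.
by apply: conjI_antitone => q; exact: Ainf_le_A.
Qed.

End Iteration.

Local Open Scope ereal_scope.

Theorem theorem2p3 (R : realType) (X : completeNormedModType R)
  (HX : reflexive_space X) :
  (* (i) *)
  (forall h : X * dual X -> \bar R, Hall h -> Hle (Aop h) /\ Hge (conjI (Aop h))) /\
  (* (ii) *)
  (forall h : X * dual X -> \bar R, (Hall h /\ Aop h = h) <->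
             (Hle h /\ forall p, edom h p -> conjI h p = h p)) /\
  (* (iii) *)
  (forall h : X * dual X -> \bar R, Hall h -> forall n : nat, (0 < n)%N ->
     edom (iter n (@Aop R X) h) = edom h `&` edom (conjI h)) /\
  (* (iv) *)
  (forall h : X * dual X -> \bar R, Hall h ->
     (forall n : nat, (0 < n)%N ->
        Hle (iter n (@Aop R X) h) /\ Hge (conjI (iter n (@Aop R X) h))) /\
     (forall (n : nat) p, (0 < n)%N ->
        iter n.+1 (@Aop R X) h p <= iter n (@Aop R X) h p /\
        conjI (iter n (@Aop R X) h) p <= conjI (iter n.+1 (@Aop R X) h) p) /\
     (forall p, (fun n => iter n (@Aop R X) h p) @ \oo --> Ainf h p) /\
     edom (Ainf h) = edom h `&` edom (conjI h) /\
     (lsc (Ainf h) -> Hall (Ainf h) /\ Aop (Ainf h) = Ainf h)) /\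
  (* (v) *)
  (forall h : X * dual X -> \bar R, Hall h -> forall (n : nat) p, (0 < n)%N ->
     conjI (iter n (@Aop R X) h) p <= Ainf h p /\
     Ainf h p <= iter n (@Aop R X) h p) /\
  (* (vi) *)
  (forall h : X * dual X -> \bar R, Hall h -> forall p, (edom h `&` edom (conjI h)) p ->
     (fun n => conjI (iter n (@Aop R X) h) p) @ \oo --> Ainf h p) /\
  (* (vii) *)
  (forall (G : set (X * dual X)) (h : X * dual X -> \bar R), maximal_monotone G -> HT G h ->
     lsc (Ainf h) -> HT G (Ainf h)).
Proof.
split; first by move=> h [G [mG hh]]; exact: Hle_Aop mG hh.
split; first exact: Aop_fixedP.
split; first by move=> h [G [mG hh]] [//|n] _; exact: edom_A mG hh n.
split.
  move=> h [G [mG hh]]; split; first by move=> [//|n] _; exact: A_Hle mG hh n.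
  split.
    move=> [//|n] p _; split.
    - exact: A_nonincreasing mG hh p n n.+1 (leqnSn n).
    - exact: conjA_nondecreasing mG hh p n n.+1 (leqnSn n).
  split; first exact: iter_Aop_cvg mG hh.
  split; first exact: edom_Ainf mG hh.
  move=> Ainf_lsc; split; last exact: Ainf_fixed mG hh.
  by exists G; split=> //; exact: Ainf_HT.
split.
  move=> h [G [mG hh]] [//|n] p _.
  by split; [exact: conjA_le_Ainf mG hh n p|exact: Ainf_le_A mG hh n p].
split.
  move=> h [G [mG hh]] p hp; rewrite -(cvg_shiftS _ (nbhs (Ainf h p))).
  exact: (conjA_cvg mG hh hp).
exact: Ainf_HT.
Qed.
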